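(* Let $L \in \mathbb{N}$, $q \in [1,\infty]$, $c > 0$, and $N_0,\dots,N_L \in \mathbb{N}$. Then every $R(\Phi) \in \mathcal{H}_{(N_0,\dots,N_L),c}^q$ satisfies \[ \mathrm{Lip}_{\ell^2} ( R(\Phi) ) \leq \begin{cases} c^{L} & \text{if } q \leq 2, \\ c^{L} \cdot (\sqrt{N_0 N_L} \cdot N_{1} \cdots N_{L-1})^{1 - 2 / q} & \text{if } q \geq 2 . \end{cases} \]
   Context: $\varrho(x)=\max\{0,x\}$ componentwise. For $\Phi=((W^i,b^i))_{i=1}^L$, $W^i\in\mathbb{R}^{N_i\times N_{i-1}}$, $b^i\in\mathbb{R}^{N_i}$, the realization $R(\Phi):\mathbb{R}^{N_0}\to\mathbb{R}^{N_L}$ is $R(\Phi)(x)=x^L$ with $x^0=x$, $x^i=\varrho(W^ix^{i-1}+b^i)$ for $1\le i\le L-1$, $x^L=W^Lx^{L-1}+b^L$. For matrices/vectors $\|\cdot\|_{\ell^q}$ is the entrywise $\ell^q$ norm (max absolute entry for $q=\infty$), $\|\Phi\|_{\ell^q}=\max_i\max\{\|W^i\|_{\ell^q},\|b^i\|_{\ell^q}\}$, and $\mathcal{H}^q_{(N_0,\dots,N_L),c}=\{R(\Phi):\|\Phi\|_{\ell^q}\le c\}$. For $f:\mathbb{R}^d\to\mathbb{R}^k$, $\mathrm{Lip}_{\ell^2}(f)=\sup_{x\ne y}\|f(x)-f(y)\|_{\ell^2}/\|x-y\|_{\ell^2}$. For $q=\infty$, $2/q=0$. *)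

From HB Require Import structures.
From mathcomp Require Import all_boot all_order all_algebra.
From mathcomp Require Import all_classical all_reals.
From mathcomp Require Import ereal exp.
Set Implicit Arguments. Unset Strict Implicit. Unset Printing Implicit Defensive.
Import Order.TTheory GRing.Theory Num.Theory.
Local Open Scope ring_scope.

Section Defs.
Variable R : realType.

Definition relu m (v : 'cV[R]_m) : 'cV[R]_m := map_mx (fun t => Num.max t 0) v.

Definition lq_norm (q : \bar R) m n (A : 'M[R]_(m, n)) : R :=
  match q with
  | EFin r => (\sum_(i < m) \sum_(j < n) `|A i j| `^ r) `^ r^-1
  | +oo%E => \big[Num.max/0]_(i < m) \big[Num.max/0]_(j < n) `|A i j|
  | -oo%E => 0
  end.

Definition l2 m (v : 'cV[R]_m) : R := Num.sqrt (\sum_(i < m) v i 0 ^+ 2).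

(* Network Phi = ((W^i, b^i))_{i=1}^L with architecture N 0, ..., N L:
   W i : weight of layer i+1 (N_{i+1} x N_i), b i : bias of layer i+1. Only
   i < L are used. *)
Fixpoint hidden (N : nat -> nat) (W : forall i, 'M[R]_(N i.+1, N i))
  (b : forall i, 'cV[R]_(N i.+1)) (x : 'cV[R]_(N 0)) (k : nat) : 'cV[R]_(N k) :=
  match k as k0 return 'cV[R]_(N k0) with
  | 0 => x
  | k'.+1 => relu (W k' *m hidden W b x k' + b k')
  end.

Definition realization (N : nat -> nat) (L : nat) (W : forall i, 'M[R]_(N i.+1, N i))
  (b : forall i, 'cV[R]_(N i.+1)) (x : 'cV[R]_(N 0)) : 'cV[R]_(N L) :=
  match L as l return 'cV[R]_(N l) with
  | 0 => x
  | L'.+1 => W L' *m hidden W b x L' + b L'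
  end.

Definition net_norm (q : \bar R) (N : nat -> nat) (L : nat)
  (W : forall i, 'M[R]_(N i.+1, N i)) (b : forall i, 'cV[R]_(N i.+1)) : R :=
  \big[Num.max/0]_(i < L) Num.max (lq_norm q (W i)) (lq_norm q (b i)).

Definition Lip_l2 d k (f : 'cV[R]_d -> 'cV[R]_k) : \bar R :=
  ereal_sup [set z | exists x y : 'cV[R]_d, x != y /\
                     z = (l2 (f x - f y) / l2 (x - y))%:E].

Definition exp_q (q : \bar R) : R :=
  match q with
  | EFin r => 1 - 2 / r
  | _ => 1
  end.
End Defs.

(** With [|v|^2] the squared Euclidean norm and [|A|_F] the Frobenius norm,
Cauchy-Schwarz gives [|A x|^2 <= |A|_F^2 |x|^2], and the ReLU is
1-Lipschitz, so the squared Lipschitz constant of [R(Phi)] is at most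
[prod_i |W^i|_F^2].  Each factor is compared with the entrywise [l^q] norm: for
[q <= 2] the [l^q] norm dominates the [l^2] norm, while for [q >= 2] Hoelder's
inequality costs the factor [(N_i N_(i-1))^(1 - 2/q)]; the product of these
dimension factors is [(sqrt(N_0 N_L) N_1 ... N_(L-1))^(2(1 - 2/q))]. *)

From HB Require Import structures.
From mathcomp Require Import all_boot all_order all_algebra.
From mathcomp Require Import all_classical all_reals.
From mathcomp Require Import ereal exp.
From mathcomp Require Import ring lra.
Set Implicit Arguments. Unset Strict Implicit. Unset Printing Implicit Defensive.
Import Order.TTheory GRing.Theory Num.Theory.
Local Open Scope ring_scope.

Lemma powR_invK (R : realType) (x p : R) : 0 <= x -> p != 0 -> (x `^ p^-1) `^ p = x.
Proof. by move=> x_ge0 p_neq0; rewrite -powRrM mulVf // powRr1. Qed.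

Section FiniteSums.
Variables (R : realType) (T : finType).
Implicit Types (a f g : T -> R) (p : R).

Lemma sum_CauchySchwarz f g :
  (\sum_k f k * g k) ^+ 2 <= (\sum_k f k ^+ 2) * (\sum_k g k ^+ 2).
Proof.
set A := \sum_k f k ^+ 2; set B := \sum_k f k * g k; set G := \sum_k g k ^+ 2.
have [A0|A_neq0] := eqVneq A 0.
  have f0 k : f k = 0.
    by apply/eqP; rewrite -sqrf_eq0; apply/eqP/(psumr_eq0P _ A0) => // *; apply: sqr_ge0.
  by rewrite /B big1 ?expr0n ?A0 ?mul0r // => k _; rewrite f0 mul0r.
have A_gt0 : 0 < A by rewrite lt_def A_neq0 sumr_ge0 // => k _; apply: sqr_ge0.
(* [t] minimizes the nonnegative quadratic [t |-> \sum_k (t f k - g k)^2]. *)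
set t := B / A.
have : 0 <= \sum_k (t * f k - g k) ^+ 2 by apply: sumr_ge0 => k _; apply: sqr_ge0.
have -> : \sum_k (t * f k - g k) ^+ 2 = G - B ^+ 2 / A.
  transitivity (t ^+ 2 * A - 2 * t * B + G); last by rewrite /t; field.
  rewrite /A /B /G !mulr_sumr -sumrB -big_split /=.
  by apply: eq_bigr => k _; ring.
by rewrite subr_ge0 ler_pdivrMr // mulrC.
Qed.

Lemma sum_le_powR_sum a p : (forall k, 0 <= a k) -> 0 < p <= 1 ->
  \sum_k a k <= (\sum_k a k `^ p) `^ p^-1.
Proof.
move=> a_ge0 /andP[p_gt0 p_le1].
set S := \sum_k _; set M := S `^ p^-1.
have S_ge0 : 0 <= S by apply: sumr_ge0 => k _; apply: powR_ge0.
have MpE : M `^ p = S by rewrite powR_invK ?gt_eqF.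
have aM k : a k <= M.
  rewrite -[a k]powRr1 // -[1](@mulfV _ p) ?gt_eqF // powRrM.
  apply: ge0_ler_powR; rewrite ?nnegrE ?invr_ge0 ?powR_ge0 ?(ltW p_gt0) //.
  by rewrite /S (bigD1 k) //= lerDl sumr_ge0 // => i _; apply: powR_ge0.
have powR_split x : 0 <= x -> x = x `^ p * x `^ (1 - p).
  by move=> x_ge0; rewrite -powRD ?subrKC ?powRr1 // oner_eq0.
apply: le_trans (_ : _ <= \sum_k a k `^ p * M `^ (1 - p)) _.
  apply: ler_sum => k _; rewrite {1}(powR_split (a k)) //.
  by rewrite ler_wpM2l ?powR_ge0 // ge0_ler_powR ?nnegrE ?subr_ge0 ?powR_ge0.
by rewrite -mulr_suml -/S -MpE -powR_split ?powR_ge0.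
Qed.

Lemma sum_le_card_powR_sum a p : (forall k, 0 <= a k) -> 1 <= p ->
  \sum_k a k <= #|T|%:R `^ (1 - p^-1) * (\sum_k a k `^ p) `^ p^-1.
Proof.
move=> a_ge0; rewrite le_eqVlt => /predU1P[<-|p_gt1].
  apply: le_trans (@sum_le_powR_sum a 1 a_ge0 _) _; first by rewrite ltr01 lexx.
  by rewrite invr1 subrr powRr0 mul1r.
have p_gt0 : 0 < p by lra.
set S := \sum_k _; set M := S `^ p^-1.
have S_ge0 : 0 <= S by apply: sumr_ge0 => k _; apply: powR_ge0.
have [S0|S_neq0] := eqVneq S 0.
  have a0 k : a k = 0.
    by apply: (@powR_eq0_eq0 _ _ p); apply: (psumr_eq0P _ S0) => // *; apply: powR_ge0.
  by rewrite big1 ?mulr_ge0 ?powR_ge0.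
have S_gt0 : 0 < S by rewrite lt_def S_neq0.
have MpE : M `^ p = S by rewrite powR_invK ?gt_eqF.
have n_gt0 : 0 < #|T|%:R :> R.
  rewrite ltr0n lt0n; apply: contraTneq S_gt0 => /card0_eq T0.
  by rewrite /S big_pred0 ?ltxx.
have M_gt0 : 0 < M by rewrite powR_gt0.
(* Young's inequality with the conjugate exponent q of p, applied to a k / M and #|T|^(-1/q) *)
set q := (1 - p^-1)^-1.
have q_gt0 : 0 < q by rewrite invr_gt0 subr_gt0 invf_lt1.
have pq : p^-1 + q^-1 = 1 by rewrite invrK addrC subrK.
set y := #|T|%:R `^ (- q^-1).
have y_gt0 : 0 < y by rewrite powR_gt0.
have MVpE : M^-1 `^ p = S^-1.
  by rewrite -powR_inv1 ?(ltW M_gt0) // -powRrM mulrC powRrM MpE powR_inv1 ?(ltW S_gt0).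
have yqE : y `^ q = #|T|%:R^-1.
  by rewrite -powRrM mulNr mulVf ?gt_eqF // powR_inv1 ?ler0n.
have young k : a k / M * y <= a k `^ p / S / p + #|T|%:R^-1 / q.
  have := conjugate_powR (divr_ge0 (a_ge0 k) (ltW M_gt0)) (ltW y_gt0) p_gt0 q_gt0 pq.
  by rewrite powRM ?invr_ge0 ?(ltW M_gt0) // MVpE yqE.
have : \sum_k a k / M * y <= \sum_k (a k `^ p / S / p + #|T|%:R^-1 / q).
  by apply: ler_sum => k _; apply: young.
rewrite big_split /= -!mulr_suml -/S sumr_const -[_ *+ _]mulr_natr mulfV ?gt_eqF //.
rewrite mulVf ?gt_eqF // !mul1r pq -ler_pdivlMr // ler_pdivrMr //.
by rewrite /y powRN invrK mul1r invrK.
Qed.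

End FiniteSums.

Lemma prodr_powR (R : realType) (I : Type) (r : seq I) (F : I -> R) e :
  (forall i, 0 <= F i) -> \prod_(i <- r) F i `^ e = (\prod_(i <- r) F i) `^ e.
Proof.
move=> F_ge0; elim: r => [|i r IHr]; first by rewrite !big_nil powR1.
by rewrite !big_cons IHr powRM // prodr_ge0.
Qed.

Lemma prod_mul_succ (R : comPzRingType) (d : nat -> R) L : (0 < L)%N ->
  \prod_(i < L) (d i.+1 * d i) = d 0 * d L * (\prod_(1 <= i < L) d i) ^+ 2.
Proof.
case: L => // L _.
have shiftE : \prod_(0 <= i < L.+1) d i.+1 = \prod_(1 <= i < L.+1) d i * d L.+1.
  by rewrite big_nat_recr //= big_add1.
have splitE : \prod_(0 <= i < L.+1) d i = d 0 * \prod_(1 <= i < L.+1) d i.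
  by rewrite big_ltn.
rewrite -(big_mkord xpredT (fun i => d i.+1 * d i)) big_split /= shiftE splitE.
ring.
Qed.

Lemma sqrt_dims_sqrE (R : realType) (N : nat -> nat) L : (0 < L)%N ->
  (Num.sqrt ((N 0)%:R * (N L)%:R) * \prod_(1 <= i < L) (N i)%:R) ^+ 2 =
  \prod_(i < L) (N i.+1 * N i)%:R :> R.
Proof.
move=> L_gt0; under [in RHS]eq_bigr do rewrite natrM.
by rewrite (prod_mul_succ (fun i => (N i)%:R)) // exprMn sqr_sqrtr ?mulr_ge0 ?ler0n.
Qed.

Lemma exprn_powRAC (R : realType) (x e : R) n : 0 <= x -> (x ^+ n) `^ e = (x `^ e) ^+ n.
Proof.
move=> x_ge0.
by rewrite -(powR_mulrn n x_ge0) -(powR_mulrn n (powR_ge0 x e)) powRAC.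
Qed.

Section Matrices.
Variable R : realType.

Definition sqnorm m (v : 'cV[R]_m) : R := \sum_i v i 0 ^+ 2.
Definition frob2 m n (A : 'M[R]_(m, n)) : R := \sum_i \sum_j A i j ^+ 2.

Lemma l2E m (v : 'cV[R]_m) : l2 v = Num.sqrt (sqnorm v).
Proof. by []. Qed.

Lemma sqnorm_ge0 m (v : 'cV[R]_m) : 0 <= sqnorm v.
Proof. by apply: sumr_ge0 => i _; apply: sqr_ge0. Qed.

Lemma sqnorm_eq0 m (v : 'cV[R]_m) : (sqnorm v == 0) = (v == 0).
Proof.
apply/idP/eqP => [/eqP v0|->]; last by rewrite /sqnorm big1 // => i _; rewrite mxE expr0n.
apply/matrixP => i j; rewrite (ord1 j) mxE; apply/eqP; rewrite -sqrf_eq0; apply/eqP.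
by apply: (psumr_eq0P _ v0) => // k _; apply: sqr_ge0.
Qed.

Lemma frob2_ge0 m n (A : 'M[R]_(m, n)) : 0 <= frob2 A.
Proof. by apply: sumr_ge0 => i _; apply: sumr_ge0 => j _; apply: sqr_ge0. Qed.

Lemma sqnorm_mulmx m n (A : 'M[R]_(m, n)) (v : 'cV[R]_n) :
  sqnorm (A *m v) <= frob2 A * sqnorm v.
Proof.
rewrite /sqnorm /frob2 mulr_suml; apply: ler_sum => i _.
by rewrite mxE; apply: sum_CauchySchwarz.
Qed.

Lemma sqnorm_affineB m n (A : 'M[R]_(m, n)) (c : 'cV[R]_m) (x y : 'cV[R]_n) :
  sqnorm ((A *m x + c) - (A *m y + c)) <= frob2 A * sqnorm (x - y).
Proof. by rewrite opprD addrACA subrr addr0 -mulmxBr sqnorm_mulmx. Qed.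

Lemma relu_sqrB (s t : R) : (Num.max s 0 - Num.max t 0) ^+ 2 <= (s - t) ^+ 2.
Proof.
rewrite /Num.max; case: (ltP s 0) => hs; case: (ltP t 0) => ht //.
- by rewrite subrr expr0n sqr_ge0.
- by rewrite sub0r sqrrN !expr2; nra.
- by rewrite subr0 !expr2; nra.
Qed.

Lemma sqnorm_reluB m (x y : 'cV[R]_m) : sqnorm (relu x - relu y) <= sqnorm (x - y).
Proof. by apply: ler_sum => i _; rewrite !mxE relu_sqrB. Qed.

Lemma lq_norm_ge0 q m n (A : 'M[R]_(m, n)) : 0 <= lq_norm q A.
Proof. by case: q => [r| |] /=; rewrite ?powR_ge0 // bigmax_idl le_max lexx. Qed.

Lemma lq_norm_sqrE r m n (A : 'M[R]_(m, n)) : 0 < r ->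
  lq_norm r%:E A ^+ 2 =
  (\sum_(ij : 'I_m * 'I_n) (A ij.1 ij.2 ^+ 2) `^ (r / 2)) `^ (r / 2)^-1.
Proof.
move=> r_gt0; rewrite /lq_norm pair_bigA /= invf_div (mulrC 2 r^-1) (powRrM _ r^-1 2).
rewrite -(powR_mulrn 2); last exact: powR_ge0.
apply: (congr1 (fun s => (s `^ r^-1) `^ 2)).
apply: eq_bigr => ij _.
rewrite -real_normK ?num_real // -(powR_mulrn 2) ?normr_ge0 // -powRrM.
by rewrite mulrCA divff ?pnatr_eq0 ?mulr1.
Qed.

Lemma frob2_le_lq_norm q m n (A : 'M[R]_(m, n)) : (1%:E <= q <= 2%:E)%E ->
  frob2 A <= lq_norm q A ^+ 2.
Proof.
case: q => [r| |] // /andP[]; last by rewrite leye_eq.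
rewrite !lee_fin => r_ge1 r_le2.
rewrite lq_norm_sqrE; last by lra.
rewrite /frob2 pair_bigA; apply: sum_le_powR_sum => [ij|]; first exact: sqr_ge0.
by apply/andP; split; lra.
Qed.

Lemma frob2_le_card_lq_norm q m n (A : 'M[R]_(m, n)) : (2%:E <= q)%E ->
  frob2 A <= (m * n)%:R `^ exp_q q * lq_norm q A ^+ 2.
Proof.
case: q => [r| |] //= q_ge2.
  rewrite lee_fin in q_ge2; rewrite lq_norm_sqrE; last by lra.
  have -> : 1 - 2 / r = 1 - (r / 2)^-1 by rewrite invf_div.
  have -> : (m * n)%N = #|{: 'I_m * 'I_n}| by rewrite card_prod !card_ord.
  rewrite /frob2 pair_bigA.
  apply: sum_le_card_powR_sum => [ij|]; first exact: sqr_ge0.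
  by lra.
rewrite powRr1 ?ler0n // /frob2 pair_bigA /=.
set M := \big[Num.max/0]_(i < m) _.
have entry_le ij : A ij.1 ij.2 ^+ 2 <= M ^+ 2.
  rewrite -real_normK ?num_real //.
  apply: lerXn2r; rewrite ?nnegrE ?normr_ge0 ?(lq_norm_ge0 +oo%E A) //.
  apply: le_trans (le_bigmax _ (fun i => \big[Num.max/0]_(j < n) `|A i j|) ij.1).
  exact: (le_bigmax _ (fun j => `|A ij.1 j|) ij.2).
apply: le_trans (ler_sum _ (fun ij _ => entry_le ij)) _.
by rewrite sumr_const card_prod !card_ord mulr_natl.
Qed.

Lemma Lip_l2_le d k (f : 'cV[R]_d -> 'cV[R]_k) (B : R) : 0 <= B ->
  (forall x y, sqnorm (f x - f y) <= B ^+ 2 * sqnorm (x - y)) -> (Lip_l2 f <= B%:E)%E.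
Proof.
move=> B_ge0 f_lip; apply: ge_ereal_sup => _ [x [y [x_neq_y ->]]]; rewrite lee_fin.
have xy_gt0 : 0 < sqnorm (x - y) by rewrite lt_def sqnorm_eq0 subr_eq0 x_neq_y sqnorm_ge0.
rewrite !l2E ler_pdivrMr ?sqrtr_gt0 // -[B]ger0_norm // -sqrtr_sqr -sqrtrM ?sqr_ge0 //.
by rewrite ler_sqrt ?mulr_ge0 ?sqr_ge0 ?sqnorm_ge0 ?f_lip.
Qed.

End Matrices.

Section Network.
Variables (R : realType) (N : nat -> nat).
Variables (W : forall i, 'M[R]_(N i.+1, N i)) (b : forall i, 'cV[R]_(N i.+1)).

Lemma sqnorm_hiddenB x y k :
  sqnorm (hidden W b x k - hidden W b y k) <= (\prod_(i < k) frob2 (W i)) * sqnorm (x - y).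
Proof.
elim: k => [|k IHk]; first by rewrite big_ord0 mul1r.
apply: le_trans (sqnorm_reluB _ _) _; apply: le_trans (sqnorm_affineB _ _ _ _) _.
by rewrite big_ord_recr /= [_ * frob2 _]mulrC -mulrA ler_wpM2l ?frob2_ge0.
Qed.

Lemma sqnorm_realizationB L x y :
  sqnorm (realization L W b x - realization L W b y) <=
  (\prod_(i < L) frob2 (W i)) * sqnorm (x - y).
Proof.
case: L => [|L]; first by rewrite big_ord0 mul1r.
apply: le_trans (sqnorm_affineB _ _ _ _) _.
by rewrite big_ord_recr /= [_ * frob2 _]mulrC -mulrA ler_wpM2l ?frob2_ge0 ?sqnorm_hiddenB.
Qed.

Lemma Lip_l2_realization_le L (B : R) :
  0 <= B -> \prod_(i < L) frob2 (W i) <= B ^+ 2 -> (Lip_l2 (realization L W b) <= B%:E)%E.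
Proof.
move=> B_ge0 prod_le; apply: Lip_l2_le => // x y.
apply: le_trans (@sqnorm_realizationB L x y) _.
by rewrite ler_wpM2r ?sqnorm_ge0.
Qed.

Lemma lq_norm_le_net_norm q L (i : 'I_L) : lq_norm q (W i) <= net_norm q L W b.
Proof.
apply: le_trans (le_bigmax _ (fun i : 'I_L => Num.max (lq_norm q (W i)) (lq_norm q (b i))) i).
by rewrite le_max lexx.
Qed.

End Network.

Theorem lemma2p8 (R : realType) (L : nat) (q : \bar R) (c : R)
  (N : nat -> nat) (W : forall i, 'M[R]_(N i.+1, N i)) (b : forall i, 'cV[R]_(N i.+1)) :
  (0 < L)%N -> (1%:E <= q)%E -> 0 < c ->
  net_norm q L W b <= c ->
  ((q <= 2%:E)%E -> (Lip_l2 (realization L W b) <= (c ^+ L)%:E)%E) /\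
  ((2%:E <= q)%E -> (Lip_l2 (realization L W b) <=
     (c ^+ L * (Num.sqrt ((N 0)%:R * (N L)%:R) * \prod_(1 <= i < L) (N i)%:R)
        `^ exp_q q)%:E)%E).
Proof.
move=> L_gt0 q_ge1 c_gt0 net_le.
have sqr_W_le (i : 'I_L) : lq_norm q (W i) ^+ 2 <= c ^+ 2.
  rewrite lerXn2r ?nnegrE ?lq_norm_ge0 ?(ltW c_gt0) //.
  by apply: le_trans net_le; apply: lq_norm_le_net_norm.
split => [q_le2 | q_ge2]; apply: Lip_l2_realization_le.
- exact: exprn_ge0 (ltW c_gt0).
- apply: le_trans (_ : _ <= \prod_(i < L) c ^+ 2) _.
    apply: ler_prod => i _; rewrite frob2_ge0 /=.
    by apply: le_trans (sqr_W_le i); apply: frob2_le_lq_norm; rewrite q_ge1.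
  by rewrite prodr_const card_ord exprAC.
- by rewrite mulr_ge0 ?powR_ge0 ?exprn_ge0 ?(ltW c_gt0).
- apply: le_trans (_ : _ <= \prod_(i < L) ((N i.+1 * N i)%:R `^ exp_q q * c ^+ 2)) _.
    apply: ler_prod => i _; rewrite frob2_ge0 /=.
    apply: le_trans (frob2_le_card_lq_norm _ q_ge2) _.
    by rewrite ler_wpM2l ?powR_ge0.
  rewrite big_split /= prodr_const card_ord prodr_powR => [|i]; last exact: ler0n.
  rewrite -sqrt_dims_sqrE // exprn_powRAC; last first.
    by rewrite mulr_ge0 ?sqrtr_ge0 // prodr_ge0 // => i _; rewrite ler0n.
  by rewrite [X in _ <= X]exprMn exprAC mulrC.
Qed.
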